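(* Identify the tangent space of $\mathbb O'P^2$ at $P_0=[1,0,0]$ with $\mathbb O'^2$ via the chart $[1,u,v]\mapsto(u,v)$, a pair $(a,b)$ corresponding to the tangent vector with $du=a$, $dv=b$. Then the Riemann curvature tensor of $(\mathbb O'P^2,g)$ at $P_0$ is $$\begin{aligned}R\big((a,b),(c,d),(e,f),(g,h)\big)=&\,4\langle a,e\rangle\langle c,g\rangle-4\langle c,e\rangle\langle a,g\rangle+4\langle b,f\rangle\langle d,h\rangle-4\langle d,f\rangle\langle b,h\rangle\\&-\langle e\bar d,g\bar b\rangle+\langle e\bar b,g\bar d\rangle-\langle c\bar f,a\bar h\rangle+\langle a\bar f,c\bar h\rangle-\langle a\bar d-c\bar b,\ g\bar f-e\bar h\rangle.\end{aligned}$$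
   Context: Para-octonions $\mathbb O'=\mathbb H\oplus\mathbb H$ with product $(q_1,q_2)(p_1,p_2)=(q_1p_1+\bar p_2q_2,\ p_2q_1+q_2\bar p_1)$, conjugation $\overline{(q_1,q_2)}=(\bar q_1,-q_2)$, $\langle a,b\rangle=\mathrm{Re}(a\bar b)$ (signature $(4,4)$), $|a|^2=\langle a,a\rangle$. $\mathbb O'P^2=\mathcal U/_\sim$ where $\mathcal U=\{(1,y,z):1+|y|^2+|z|^2>0\}\cup\{(x,1,z):|x|^2+1+|z|^2>0\}\cup\{(x,y,1):|x|^2+|y|^2+1>0\}$ and $[a,b,c]\sim[d,e,f]$ iff $(a,b,c)=(d\lambda,e\lambda,f\lambda)$ with $|\lambda|^2>0$; charts $[1,u,v]\mapsto(u,v)$ etc. Metric $g$ on each chart, for tangent vector $(du,dv)=(\xi,\eta)$: $ds^2=\frac{|\xi|^2(1+|v|^2)+|\eta|^2(1+|u|^2)-2\mathrm{Re}[(u\bar v)(\eta\bar\xi)]}{(1+|u|^2+|v|^2)^2}$. Curvature convention: in coordinates in which the first derivatives of the metric vanish at the point, $R_{\alpha\beta\gamma\delta}=\tfrac12\big[\partial_\alpha\partial_\delta g_{\beta\gamma}+\partial_\beta\partial_\gamma g_{\alpha\delta}-\partial_\beta\partial_\delta g_{\alpha\gamma}-\partial_\alpha\partial_\gamma g_{\beta\delta}\big]$. *)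

From Stdlib Require Import Reals.
From Coquelicot Require Import Coquelicot.
Open Scope R_scope.

(** * Quaternions H = R^4, basis 1,i,j,k with ij = k *)
Record quat := Quat { q0 : R; q1 : R; q2 : R; q3 : R }.

Definition qadd (a b : quat) : quat :=
  Quat (q0 a + q0 b) (q1 a + q1 b) (q2 a + q2 b) (q3 a + q3 b).
Definition qopp (a : quat) : quat := Quat (- q0 a) (- q1 a) (- q2 a) (- q3 a).
Definition qscal (t : R) (a : quat) : quat :=
  Quat (t * q0 a) (t * q1 a) (t * q2 a) (t * q3 a).
Definition qmul (a b : quat) : quat :=
  Quat (q0 a * q0 b - q1 a * q1 b - q2 a * q2 b - q3 a * q3 b)
       (q0 a * q1 b + q1 a * q0 b + q2 a * q3 b - q3 a * q2 b)
       (q0 a * q2 b - q1 a * q3 b + q2 a * q0 b + q3 a * q1 b)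
       (q0 a * q3 b + q1 a * q2 b - q2 a * q1 b + q3 a * q0 b).
Definition qconj (a : quat) : quat := Quat (q0 a) (- q1 a) (- q2 a) (- q3 a).

(** * Para-octonions O' = H (+) H *)
Record poct := POct { oa : quat; ob : quat }.

Definition oadd (x y : poct) : poct := POct (qadd (oa x) (oa y)) (qadd (ob x) (ob y)).
Definition oopp (x : poct) : poct := POct (qopp (oa x)) (qopp (ob x)).
Definition osub (x y : poct) : poct := oadd x (oopp y).
Definition oscal (t : R) (x : poct) : poct := POct (qscal t (oa x)) (qscal t (ob x)).
Definition omul (x y : poct) : poct :=
  POct (qadd (qmul (oa x) (oa y)) (qmul (qconj (ob y)) (ob x)))
       (qadd (qmul (ob y) (oa x)) (qmul (ob x) (qconj (oa y)))).
Definition oconj (x : poct) : poct := POct (qconj (oa x)) (qopp (ob x)).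
Definition ore (x : poct) : R := q0 (oa x).
Definition oinner (x y : poct) : R := ore (omul x (oconj y)).
Definition onorm2 (x : poct) : R := oinner x x.

(** * The chart [1,u,v] |-> (u,v): points and tangent vectors are in O'^2 *)
Definition pt := (poct * poct)%type.
Definition padd (p q : pt) : pt := (oadd (fst p) (fst q), oadd (snd p) (snd q)).
Definition pscal (t : R) (p : pt) : pt := (oscal t (fst p), oscal t (snd p)).
Definition ozero : poct := POct (Quat 0 0 0 0) (Quat 0 0 0 0).
Definition P0 : pt := (ozero, ozero).

Definition ds2 (p : pt) (X : pt) : R :=
  let u := fst p in let v := snd p in let xi := fst X in let eta := snd X in
  (onorm2 xi * (1 + onorm2 v) + onorm2 eta * (1 + onorm2 u)
   - 2 * ore (omul (omul u (oconj v)) (omul eta (oconj xi))))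
  / (1 + onorm2 u + onorm2 v) ^ 2.

Definition gmet (p : pt) (X Y : pt) : R :=
  (ds2 p (padd X Y) - ds2 p X - ds2 p Y) / 2.

Definition quat_coord (k : nat) (q : quat) : R :=
  match k with 0 => q0 q | 1 => q1 q | 2 => q2 q | _ => q3 q end.
Definition oct_coord (k : nat) (x : poct) : R :=
  if Nat.ltb k 4 then quat_coord k (oa x) else quat_coord (k - 4) (ob x).
Definition pt_coord (k : nat) (p : pt) : R :=
  if Nat.ltb k 8 then oct_coord k (fst p) else oct_coord (k - 8) (snd p).

Definition kron (i j : nat) : R := if Nat.eqb i j then 1 else 0.
Definition quat_e (k : nat) : quat := Quat (kron k 0) (kron k 1) (kron k 2) (kron k 3).
Definition qzero : quat := Quat 0 0 0 0.
Definition oct_e (k : nat) : poct :=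
  if Nat.ltb k 4 then POct (quat_e k) qzero else POct qzero (quat_e (k - 4)).
Definition pt_e (i : nat) : pt :=
  if Nat.ltb i 8 then (oct_e i, ozero) else (ozero, oct_e (i - 8)).

Definition partial (i : nat) (f : pt -> R) (p : pt) : R :=
  Derive (fun t => f (padd p (pscal t (pt_e i)))) 0.

Definition gcomp (i j : nat) (p : pt) : R := gmet p (pt_e i) (pt_e j).

Definition d2g (a b c d : nat) : R := partial a (partial b (gcomp c d)) P0.

(** Curvature components at P0 by the stated convention (valid since the first
    derivatives of the metric vanish at P0 in these coordinates):
    R_{abcd} = 1/2 [ d_a d_d g_{bc} + d_b d_c g_{ad} - d_b d_d g_{ac} - d_a d_c g_{bd} ] *)
Definition Rcomp (a b c d : nat) : R :=
  / 2 * (d2g a d b c + d2g b c a d - d2g b d a c - d2g a c b d).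

Definition sum16 (f : nat -> R) : R := sum_f_R0 f 15.

Definition Rtensor (X Y Z W : pt) : R :=
  sum16 (fun a => sum16 (fun b => sum16 (fun c => sum16 (fun d =>
    Rcomp a b c d * pt_coord a X * pt_coord b Y * pt_coord c Z * pt_coord d W)))).

From Stdlib Require Import Reals Lra.
From Coquelicot Require Import Coquelicot.
Open Scope R_scope.

(* Along the plane P0 + sA + tB of the chart, ds^2 = N/Q^2 where N(X,Y) is the flat form
   <X,Y> = <X1,Y1> + <X2,Y2> plus a quadratic form in (s,t), and Q is 1 plus a quadratic form.
   Hence the first derivatives of g vanish at P0, and d_A d_B g(X,Y) at P0 is the polarized
   quadratic part of N minus 4<X,Y><A,B>.  The curvature at P0 is thus a 4-linear form in
   (A,B,X,Y); by multilinearity the coordinate sum defining R(X,Y,Z,W) equals this form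
   evaluated at X,Y,Z,W, and the stated expression is a polynomial identity in the 64 real
   coordinates of the eight para-octonions. *)

Ltac destruct_pts := repeat match goal with p : pt |- _ =>
  destruct p as [[[? ? ? ?] [? ? ? ?]] [[? ? ? ?] [? ? ? ?]]] end.
Ltac unfold_pt := cbv beta iota zeta delta [
  gmet ds2 onorm2 oinner ore omul oconj oadd osub oopp oscal padd pscal P0 ozero qzero
  qadd qmul qconj qopp qscal oa ob q0 q1 q2 q3 fst snd
  pt_e oct_e quat_e kron pt_coord oct_coord quat_coord Nat.ltb Nat.leb Nat.eqb Nat.sub].
Ltac pt_ext := repeat match goal with
  | |- Quat _ _ _ _ = Quat _ _ _ _ => f_equal
  | |- POct _ _ = POct _ _ => f_equal
  | |- pair _ _ = pair _ _ => f_equal end.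

Definition linear_pt (L : pt -> R) : Prop :=
  forall a b p q, L (padd (pscal a p) (pscal b q)) = a * L p + b * L q.

Fixpoint coord_expansion (n : nat) (W : pt) : pt :=
  match n with
  | O => pscal (pt_coord 0 W) (pt_e 0)
  | S m => padd (coord_expansion m W) (pscal (pt_coord n W) (pt_e n))
  end.

Lemma linear_pt_scale L k : linear_pt L -> linear_pt (fun V => L V * k).
Proof. intros HL a b p q. rewrite HL. ring. Qed.

Lemma pscal_1 p : pscal 1 p = p.
Proof. destruct_pts. unfold_pt. pt_ext; ring. Qed.

Lemma padd_pscal_0 t p : padd (pscal t p) (pscal 0 p) = pscal t p.
Proof. destruct_pts. unfold_pt. pt_ext; ring. Qed.

Lemma coord_expansion_15 W : coord_expansion 15 W = W.
Proof. destruct_pts. cbn [coord_expansion]. unfold_pt. pt_ext; ring. Qed.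

Lemma linear_coord_expansion L W n : linear_pt L ->
  L (coord_expansion n W) = sum_f_R0 (fun d => L (pt_e d) * pt_coord d W) n.
Proof.
  intros HL. induction n as [|n IH]; cbn [coord_expansion sum_f_R0].
  - rewrite <- padd_pscal_0, HL. ring.
  - rewrite <- (pscal_1 (coord_expansion n W)), HL, IH. ring.
Qed.

Lemma sum16_coord_linear L W : linear_pt L -> sum16 (fun d => L (pt_e d) * pt_coord d W) = L W.
Proof.
  intros HL. unfold sum16. rewrite <- linear_coord_expansion, coord_expansion_15; auto.
Qed.

Lemma Derive_even_quadratic_quotient c0 c2 e2 :
  Derive (fun t => (c0 + c2 * t^2) / (1 + e2 * t^2)^2) 0 = 0.
Proof.
  apply is_derive_unique. auto_derive.
  - replace (1 + e2 * (0 * (0 * 1))) with 1 by ring. lra.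
  - replace (1 + e2 * (0 * (0 * 1))) with 1 by ring. field.
Qed.

Lemma locally_0_quadratic_pos e : locally 0 (fun s => 0 < 1 + e * s^2).
Proof.
  assert (Hc : continuous (fun s => 1 + e * s^2) 0).
  { apply (ex_derive_continuous (V := R_NormedModule)). auto_derive. exact I. }
  apply (Hc (fun y => 0 < y)). apply (open_gt 0). lra.
Qed.

Lemma is_derive_quadratic_quotient_t0 c0 c11 c12 c22 e11 e12 e22 s :
  0 < 1 + e11 * s^2 ->
  is_derive (fun t => (c0 + c11 * s^2 + c12 * s * t + c22 * t^2)
                      / (1 + e11 * s^2 + e12 * s * t + e22 * t^2)^2) 0
    (c12 * s / (1 + e11 * s^2)^2
     - 2 * (c0 + c11 * s^2) * (e12 * s) / (1 + e11 * s^2)^3).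
Proof.
  intros Hs. auto_derive;
    replace (1 + e11 * (s * (s * 1)) + e12 * s * 0 + e22 * (0 * (0 * 1)))
      with (1 + e11 * s^2) by ring.
  - apply Rgt_not_eq. nra.
  - field. lra.
Qed.

Lemma mixed_Derive_quadratic_quotient c0 c11 c12 c22 e11 e12 e22 :
  Derive (fun s => Derive (fun t => (c0 + c11 * s^2 + c12 * s * t + c22 * t^2)
                                    / (1 + e11 * s^2 + e12 * s * t + e22 * t^2)^2) 0) 0
  = c12 - 2 * c0 * e12.
Proof.
  rewrite (Derive_ext_loc _ (fun s => c12 * s / (1 + e11 * s^2)^2
                                      - 2 * (c0 + c11 * s^2) * (e12 * s) / (1 + e11 * s^2)^3)).
  - apply is_derive_unique. auto_derive.
    + replace (1 + e11 * (0 * (0 * 1))) with 1 by ring. lra.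
    + replace (1 + e11 * (0 * (0 * 1))) with 1 by ring. field.
  - apply (filter_imp _ _ (fun s Hs => is_derive_unique _ _ _
             (is_derive_quadratic_quotient_t0 c0 c11 c12 c22 e11 e12 e22 s Hs))).
    apply locally_0_quadratic_pos.
Qed.

Definition pinner (X Y : pt) : R := oinner (fst X) (fst Y) + oinner (snd X) (snd Y).

Definition gcross (X Y : pt) : poct :=
  oadd (omul (snd Y) (oconj (fst X))) (omul (snd X) (oconj (fst Y))).

Definition gnum (p X Y : pt) : R :=
  oinner (fst X) (fst Y) * (1 + onorm2 (snd p)) + oinner (snd X) (snd Y) * (1 + onorm2 (fst p))
  - ore (omul (omul (fst p) (oconj (snd p))) (gcross X Y)).

Definition gden (p : pt) : R := 1 + onorm2 (fst p) + onorm2 (snd p).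

Definition gnum_quad (A X Y : pt) : R :=
  oinner (fst X) (fst Y) * onorm2 (snd A) + oinner (snd X) (snd Y) * onorm2 (fst A)
  - ore (omul (omul (fst A) (oconj (snd A))) (gcross X Y)).
(* the polarization gnum_quad (A + B) - gnum_quad A - gnum_quad B *)
Definition gnum_polar (A B X Y : pt) : R :=
  2 * oinner (fst X) (fst Y) * oinner (snd A) (snd B)
  + 2 * oinner (snd X) (snd Y) * oinner (fst A) (fst B)
  - ore (omul (oadd (omul (fst A) (oconj (snd B))) (omul (fst B) (oconj (snd A)))) (gcross X Y)).

Definition hess (A B X Y : pt) : R := gnum_polar A B X Y - 4 * pinner X Y * pinner A B.

Definition curv (A B C D : pt) : R :=
  / 2 * (hess A D B C + hess B C A D - hess B D A C - hess A C B D).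

Ltac metric_ring :=
  destruct_pts; unfold curv, hess, gnum_polar, gnum_quad, gnum, gden, gcross, pinner; unfold_pt;
  ring.

Lemma gmet_quotient p X Y : gmet p X Y = gnum p X Y / gden p ^ 2.
Proof.
  unfold gmet, ds2, gnum, gcross, gden. cbv zeta. unfold Rdiv.
  generalize (/ (1 + onorm2 (fst p) + onorm2 (snd p)) ^ 2). intros k.
  destruct_pts; unfold_pt; field.
Qed.

Lemma gnum_plane A B X Y s t :
  gnum (padd (padd P0 (pscal s A)) (pscal t B)) X Y =
  pinner X Y + gnum_quad A X Y * s^2 + gnum_polar A B X Y * s * t + gnum_quad B X Y * t^2.
Proof. metric_ring. Qed.

Lemma gden_plane A B s t :
  gden (padd (padd P0 (pscal s A)) (pscal t B)) =
  1 + pinner A A * s^2 + 2 * pinner A B * s * t + pinner B B * t^2.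
Proof. metric_ring. Qed.

Lemma gnum_line B X Y t :
  gnum (padd P0 (pscal t B)) X Y = pinner X Y + gnum_quad B X Y * t^2.
Proof. metric_ring. Qed.

Lemma gden_line B t : gden (padd P0 (pscal t B)) = 1 + pinner B B * t^2.
Proof. metric_ring. Qed.

Lemma hess_comm12 A B X Y : hess A B X Y = hess B A X Y.
Proof. metric_ring. Qed.

Lemma hess_comm34 A B X Y : hess A B X Y = hess A B Y X.
Proof. metric_ring. Qed.

Lemma hess_linear1 a b p q B X Y :
  hess (padd (pscal a p) (pscal b q)) B X Y = a * hess p B X Y + b * hess q B X Y.
Proof. metric_ring. Qed.

Lemma hess_linear3 a b p q A B Y :
  hess A B (padd (pscal a p) (pscal b q)) Y = a * hess A B p Y + b * hess A B q Y.
Proof. metric_ring. Qed.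

Lemma hess_linear2 a b p q A X Y :
  hess A (padd (pscal a p) (pscal b q)) X Y = a * hess A p X Y + b * hess A q X Y.
Proof. rewrite hess_comm12, hess_linear1, (hess_comm12 p), (hess_comm12 q). reflexivity. Qed.

Lemma hess_linear4 a b p q A B X :
  hess A B X (padd (pscal a p) (pscal b q)) = a * hess A B X p + b * hess A B X q.
Proof. rewrite hess_comm34, hess_linear3, (hess_comm34 _ _ p), (hess_comm34 _ _ q). reflexivity. Qed.

Lemma curv_linear1 B C D : linear_pt (fun A => curv A B C D).
Proof. intros a b p q. unfold curv. rewrite !hess_linear1, !hess_linear3. ring. Qed.

Lemma curv_linear2 A C D : linear_pt (fun B => curv A B C D).
Proof. intros a b p q. unfold curv. rewrite !hess_linear1, !hess_linear3. ring. Qed.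

Lemma curv_linear3 A B D : linear_pt (fun C => curv A B C D).
Proof. intros a b p q. unfold curv. rewrite !hess_linear2, !hess_linear4. ring. Qed.

Lemma curv_linear4 A B C : linear_pt (fun D => curv A B C D).
Proof. intros a b p q. unfold curv. rewrite !hess_linear2, !hess_linear4. ring. Qed.

Lemma curv_formula a b c d e f g h :
  curv (a, b) (c, d) (e, f) (g, h) =
       4 * oinner a e * oinner c g - 4 * oinner c e * oinner a g
     + 4 * oinner b f * oinner d h - 4 * oinner d f * oinner b h
     - oinner (omul e (oconj d)) (omul g (oconj b))
     + oinner (omul e (oconj b)) (omul g (oconj d))
     - oinner (omul c (oconj f)) (omul a (oconj h))
     + oinner (omul a (oconj f)) (omul c (oconj h))
     - oinner (osub (omul a (oconj d)) (omul c (oconj b)))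
              (osub (omul g (oconj f)) (omul e (oconj h))).
Proof.
  destruct a as [[? ? ? ?] [? ? ? ?]], b as [[? ? ? ?] [? ? ? ?]], c as [[? ? ? ?] [? ? ? ?]],
    d as [[? ? ? ?] [? ? ? ?]], e as [[? ? ? ?] [? ? ? ?]], f as [[? ? ? ?] [? ? ? ?]],
    g as [[? ? ? ?] [? ? ? ?]], h as [[? ? ? ?] [? ? ? ?]].
  unfold curv, hess, gnum_polar, gcross, pinner; unfold_pt. field.
Qed.

Lemma Derive_gmet_line_P0 B X Y : Derive (fun t => gmet (padd P0 (pscal t B)) X Y) 0 = 0.
Proof.
  rewrite (Derive_ext _ (fun t => (pinner X Y + gnum_quad B X Y * t^2) / (1 + pinner B B * t^2)^2)).
  - apply Derive_even_quadratic_quotient.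
  - intros t. rewrite gmet_quotient, gnum_line, gden_line. reflexivity.
Qed.

Lemma mixed_Derive_gmet_P0 A B X Y :
  Derive (fun s => Derive (fun t => gmet (padd (padd P0 (pscal s A)) (pscal t B)) X Y) 0) 0
  = hess A B X Y.
Proof.
  rewrite (Derive_ext _ (fun s => Derive (fun t =>
     (pinner X Y + gnum_quad A X Y * s^2 + gnum_polar A B X Y * s * t + gnum_quad B X Y * t^2)
     / (1 + pinner A A * s^2 + 2 * pinner A B * s * t + pinner B B * t^2)^2) 0)).
  - rewrite mixed_Derive_quadratic_quotient. unfold hess. ring.
  - intros s. apply Derive_ext. intros t. rewrite gmet_quotient, gnum_plane, gden_plane. reflexivity.
Qed.

Lemma Rcomp_curv a b c d : Rcomp a b c d = curv (pt_e a) (pt_e b) (pt_e c) (pt_e d).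
Proof. unfold Rcomp, d2g, partial, gcomp. rewrite !mixed_Derive_gmet_P0. reflexivity. Qed.

Lemma Rtensor_curv X Y Z W : Rtensor X Y Z W = curv X Y Z W.
Proof.
  unfold Rtensor.
  rewrite <- (sum16_coord_linear (fun A => curv A Y Z W) X) by apply curv_linear1.
  apply sum_eq; intros a _.
  rewrite <- (sum16_coord_linear (fun B => curv (pt_e a) B Z W * pt_coord a X) Y)
    by apply linear_pt_scale, curv_linear2.
  apply sum_eq; intros b _.
  rewrite <- (sum16_coord_linear (fun C => curv (pt_e a) (pt_e b) C W * pt_coord a X * pt_coord b Y) Z)
    by apply linear_pt_scale, linear_pt_scale, curv_linear3.
  apply sum_eq; intros c _.
  rewrite <- (sum16_coord_linear
    (fun D => curv (pt_e a) (pt_e b) (pt_e c) D * pt_coord a X * pt_coord b Y * pt_coord c Z) W)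
    by apply linear_pt_scale, linear_pt_scale, linear_pt_scale, curv_linear4.
  apply sum_eq; intros d _.
  rewrite Rcomp_curv. ring.
Qed.

Theorem corollary6p8 :
  (* the chart coordinates are normal to first order at P0, so the curvature
     convention applies in them *)
  (forall i j k : nat, (i < 16)%nat -> (j < 16)%nat -> (k < 16)%nat ->
     partial k (gcomp i j) P0 = 0) /\
  (forall a b c d e f g h : poct,
     Rtensor (a, b) (c, d) (e, f) (g, h) =
       4 * oinner a e * oinner c g - 4 * oinner c e * oinner a g
     + 4 * oinner b f * oinner d h - 4 * oinner d f * oinner b h
     - oinner (omul e (oconj d)) (omul g (oconj b))
     + oinner (omul e (oconj b)) (omul g (oconj d))
     - oinner (omul c (oconj f)) (omul a (oconj h))
     + oinner (omul a (oconj f)) (omul c (oconj h))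
     - oinner (osub (omul a (oconj d)) (omul c (oconj b)))
              (osub (omul g (oconj f)) (omul e (oconj h)))).
Proof.
  split.
  - intros i j k _ _ _. apply Derive_gmet_line_P0.
  - intros. rewrite Rtensor_curv. apply curv_formula.
Qed.
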